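(* As formal power series in $t$, $$ \sum_{n \ge 0} f^+_n(x) \frac{t^n}{n!} = \frac{e^{xt} - x e^t}{e^{2xt} - x e^{2t}} \quad\text{and}\quad \sum_{n \ge 0} f^-_n(x) \frac{t^n}{n!} = \frac{x\,(e^t - e^{xt})}{e^{2xt} - x e^{2t}}. $$
   Context: A signed permutation of $[n]$ is a set $S = \{a_1, \dots, a_n\}$ with $a_i \in \{i, -i\}$, together with a bijection $w : S \to S$. - $a \in S$ is a $B$-excedance if $w(a) > a$, or if $a < 0$ and $w(a) = a$. - $w$ is a derangement if no $a \in S$ with $a > 0$ has $w(a) = a$. - $d^B_n(x) = \sum_{w \text{ derangement}} x^{\mathrm{exc}_B(w)}$, where $\mathrm{exc}_B(w)$ is the number of $B$-excedances, and $d^B_0 = 1$. - $f^+_n, f^-_n$ are the unique real polynomials with $d^B_n = f^+_n + f^-_n$, $f^+_n(x) = x^n f^+_n(1/x)$ and $f^-_n(x) = x^{n+1} f^-_n(1/x)$. *)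

From HB Require Import structures.
From mathcomp Require Import all_boot all_order all_algebra all_fingroup.
Set Implicit Arguments. Unset Strict Implicit. Unset Printing Implicit Defensive.
Import Order.TTheory GRing.Theory Num.Theory.
Local Open Scope ring_scope.

(* A signed permutation of [n] is encoded as a pair (eps, s):
   eps i = true  iff  a_(i+1) = -(i+1)  (index i : 'I_n stands for i+1),
   s : {perm 'I_n} with  w(a_(i+1)) = a_(s(i)+1). *)
Definition signed_perm (n : nat) : finType :=
  ({ffun 'I_n -> bool} * {perm 'I_n})%type.

Definition sval (n : nat) (eps : {ffun 'I_n -> bool}) (i : 'I_n) : int :=
  if eps i then - (i.+1%:Z) else i.+1%:Z.

Definition is_excB (n : nat) (p : signed_perm n) (i : 'I_n) : bool :=
  (sval p.1 i < sval p.1 (p.2 i))%R || (p.1 i && (p.2 i == i)).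

Definition excB (n : nat) (p : signed_perm n) : nat :=
  #|[set i : 'I_n | is_excB p i]|.

Definition derangementB (n : nat) (p : signed_perm n) : bool :=
  [forall i : 'I_n, ~~ ((~~ p.1 i) && (p.2 i == i))].

Definition dB (R : nzRingType) (n : nat) : {poly R} :=
  \sum_(p : signed_perm n | derangementB p) 'X^(excB p).

(* f+_n and f-_n as characterised in the paper: d = f+ + f-,
   f+(x) = x^n f+(1/x), f-(x) = x^(n+1) f-(1/x) (for all nonzero x). *)
Definition fpm_spec (R : realFieldType) (n : nat) (fp fm : {poly R}) : Prop :=
  [/\ dB R n = fp + fm,
      forall x : R, x != 0 -> fp.[x] = x ^+ n * fp.[x^-1]
    & forall x : R, x != 0 -> fm.[x] = x ^+ n.+1 * fm.[x^-1]].

(* t^m/m!-coefficient of the denominator e^(2xt) - x e^(2t) *)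
Definition egf_den (R : nzRingType) (m : nat) : {poly R} :=
  (2 ^ m)%:R *: ('X^m - 'X).

(* Coefficient of t^n/n! in the exponential (binomial) product
   (sum_k a_k t^k/k!) * (e^(2xt) - x e^(2t)). *)
Definition egf_prod_den (R : nzRingType) (a : nat -> {poly R}) (n : nat) : {poly R} :=
  \sum_(k < n.+1) 'C(n, k)%:R *: (a k * egf_den R (n - k)).

(* Let D(t) = e^(2xt) - x e^(2t); its t^n/n! coefficient is 2^n (x^n - x).
   Classifying the signed derangements of [n+1] by what n+1 does (a negative
   fixed point, inserted into a cycle of a signed derangement of [n], or
   inserted next to the only positive fixed point of a signed permutation of
   [n]) gives d_(n+1) = (2n+1) x d_n + 2x(1-x) d_n' + 2nx d_(n-1).  Combined
   with the linear relation among the coefficients of D, this shows that the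
   coefficients of d(t) D(t) obey a three-term recurrence, also obeyed by
   x^n - x^(n+1), the coefficients of (1-x) e^(xt).  This is the sum of the two
   claimed numerators, so the errors P, M of the two claims add up to 0; but
   the (anti)symmetry of f^+, f^- gives x^(n+1) P(1/x) = -P(x) and
   x^(n+2) M(1/x) = -M(x), which force (x - 1) P(x) = 0 for x <> 0.
   Existence of f^+ and f^- is the splitting of a polynomial of degree at most
   n+1 into palindromic parts of degrees n and n+1. *)

From Pilot Require Import Defs.
From HB Require Import structures.
From mathcomp Require Import all_boot all_order all_algebra all_fingroup.
From mathcomp Require Import ring zify.
Import Order.TTheory GRing.Theory Num.Theory.
Set Implicit Arguments.
Unset Strict Implicit.
Unset Printing Implicit Defensive.
Local Open Scope ring_scope.

Section ExponentialConvolution.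
Variable R : comNzRingType.
Implicit Types a b c d : nat -> {poly R}.

(* A sequence a stands for the series sum_n a_n t^n/n!: econv is the product
   of series, eshift is d/dt and etmul is multiplication by t. *)
Definition econv a b n : {poly R} :=
  \sum_(k < n.+1) 'C(n, k)%:R *: (a k * b (n - k)%N).

Definition eshift a n := a n.+1.

Definition etmul a n : {poly R} := n%:R * a n.-1.

Lemma eq_econv a a' b n : a =1 a' -> econv a b n = econv a' b n.
Proof. by move=> eq_a; apply: eq_bigr => k _; rewrite eq_a. Qed.

Lemma econvDl a1 a2 b n :
  econv (fun k => a1 k + a2 k) b n = econv a1 b n + econv a2 b n.
Proof. by rewrite -big_split /=; apply: eq_bigr => k _; rewrite mulrDl scalerDr. Qed.

Lemma econvMl (p : {poly R}) a b n : econv (fun k => p * a k) b n = p * econv a b n.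
Proof. by rewrite /econv mulr_sumr; apply: eq_bigr => k _; rewrite -mulrA scalerAr. Qed.

Lemma econvC a b n : econv a b n = econv b a n.
Proof.
rewrite /econv (reindex_inj rev_ord_inj) /=; apply: eq_bigr => k _.
have le_kn : (k <= n)%N by rewrite -ltnS.
by rewrite subSS subKn // bin_sub // mulrC.
Qed.

Lemma econv_eshift a b n :
  econv a b n.+1 = econv (eshift a) b n + econv a (eshift b) n.
Proof.
rewrite /econv big_ord_recl /= bin0 subn0.
under eq_bigr do rewrite binS natrD scalerDl.
rewrite big_split /= addrA addrC; congr (_ + _).
rewrite big_ord_recr /= bin_small // scale0r addr0.
rewrite [in RHS]big_ord_recl /= bin0 subn0; congr (_ + _).
by apply: eq_bigr => i _; rewrite /eshift /bump /= add1n subSS subnSK.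
Qed.

Lemma econv_etmul a b n : econv (etmul a) b n = etmul (econv a b) n.
Proof.
case: n => [|m]; first by rewrite /econv big_ord1 /etmul !mul0r scaler0.
rewrite /econv big_ord_recl /= {1}/etmul !mul0r scaler0 add0r /etmul mulr_sumr.
apply: eq_bigr => i _; rewrite /bump /= add1n subSS.
rewrite !scaler_nat -mulrA !mulr_natl -!mulrnA; congr (_ *+ _).
by rewrite -mul_bin_diag mulnC.
Qed.

Lemma econv_etmulr a b n : econv a (etmul b) n = etmul (econv a b) n.
Proof. by rewrite econvC econv_etmul /etmul econvC. Qed.

Lemma econv_deriv a b n :
  (econv a b n)^`() = econv (fun k => (a k)^`()) b n + econv a (fun k => (b k)^`()) n.
Proof.
rewrite /econv raddf_sum -big_split /=; apply: eq_bigr => k _.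
by rewrite derivZ derivM scalerDr.
Qed.

Lemma etmul_eshift a n : etmul (eshift a) n = n%:R * a n.
Proof. by case: n => [|n]; rewrite /etmul /eshift ?mul0r. Qed.

Definition rec_step (n : nat) (A B : {poly R}) : {poly R} :=
  ('X *+ 2) * (n%:R * A) + ('X *+ 3) * A + ('X *+ 2 * (1 - 'X)) * A^`()
  - ('X *+ 2) * (n%:R * B).

Lemma econv_rec_step d c :
  (forall n, d n.+1 = ('X *+ 2) * etmul (eshift d) n + 'X * d n
       + ('X *+ 2 * (1 - 'X)) * (d n)^`() + ('X *+ 2) * etmul d n) ->
  (forall n, c n.+1 = ('X *+ 2) * etmul (eshift c) n + ('X *+ 2 * (1 - 'X)) * (c n)^`()
       + ('X *+ 2) * c n + (- 'X *+ 4) * etmul c n) ->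
  forall n, econv d c n.+1 = rec_step n (econv d c n) (econv d c n.-1).
Proof.
move=> rec_d rec_c n.
have Ed : econv (eshift d) c n = ('X *+ 2) * etmul (econv (eshift d) c) n
   + 'X * econv d c n + ('X *+ 2 * (1 - 'X)) * econv (fun k => (d k)^`()) c n
   + ('X *+ 2) * etmul (econv d c) n.
  by rewrite (eq_econv c n rec_d) !econvDl !econvMl !econv_etmul.
have Ec : econv d (eshift c) n = ('X *+ 2) * etmul (econv d (eshift c)) n
   + ('X *+ 2 * (1 - 'X)) * econv d (fun k => (c k)^`()) n
   + ('X *+ 2) * econv d c n + (- 'X *+ 4) * etmul (econv d c) n.
  rewrite econvC (eq_econv d n rec_c) !econvDl !econvMl !(econvC _ d).
  by rewrite !econv_etmulr.
have Et : n%:R * econv d c n = etmul (econv (eshift d) c) n + etmul (econv d (eshift c)) n.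
  by case: n {Ed Ec} => [|n]; rewrite /etmul ?mul0r ?addr0 // -mulrDr -econv_eshift.
rewrite /rec_step econv_eshift Ed Ec Et econv_deriv.
rewrite -[etmul (econv d c) n]/(n%:R * econv d c n.-1).
ring.
Qed.

Lemma rec_step_uniq u v : u 0%N = v 0%N ->
  (forall n, u n.+1 = rec_step n (u n) (u n.-1)) ->
  (forall n, v n.+1 = rec_step n (v n) (v n.-1)) -> u =1 v.
Proof.
move=> eq0 rec_u rec_v.
suff uv2 n : u n = v n /\ u n.+1 = v n.+1 by move=> n; case: (uv2 n).
elim: n => [|n [IH1 IH2]]; first by rewrite rec_u rec_v /= eq0.
by split=> //; rewrite rec_u rec_v /= IH1 IH2.
Qed.

Definition egf_num n : {poly R} := 'X^n - 'X^(n.+1).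

Lemma egf_num_rec n : egf_num n.+1 = rec_step n (egf_num n) (egf_num n.-1).
Proof.
rewrite /rec_step /egf_num derivB !derivXn /=.
case: n => [|n] /=; first by rewrite expr0 expr1 !mul0r !mulr0n; ring.
by rewrite !exprS !mulrS !mulr0n; ring.
Qed.

Lemma egf_den_rec n : egf_den R n.+1 = ('X *+ 2) * etmul (eshift (egf_den R)) n
   + ('X *+ 2 * (1 - 'X)) * (egf_den R n)^`()
   + ('X *+ 2) * egf_den R n + (- 'X *+ 4) * etmul (egf_den R) n.
Proof.
rewrite etmul_eshift /etmul /egf_den !derivZ derivB derivXn derivX.
case: n => [|n] /=; first by rewrite -!mul_polyC !polyC_natr expr0 expr1; ring.
rewrite -!mul_polyC !polyC_natr !expnS !natrM !exprS.
set c := (2 ^ n)%:R; set Y := 'X^n; ring.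
Qed.

End ExponentialConvolution.

Lemma forall_lift n (j : 'I_n.+1) (P : pred 'I_n.+1) :
  [forall k, P k] = P j && [forall k : 'I_n, P (lift j k)].
Proof.
apply/forallP/andP => [H|[Pj /forallP H] k]; first by split; [|apply/forallP].
by case: (unliftP j k) => [k' ->|->].
Qed.

Section UnliftPerm.
Variables (n : nat) (i : 'I_n.+1) (s : {perm 'I_n.+1}).

Definition unlift_perm_fun (k : 'I_n) : 'I_n := odflt k (unlift (s i) (s (lift i k))).

Lemma lift_unlift_perm_fun k : lift (s i) (unlift_perm_fun k) = s (lift i k).
Proof.
rewrite /unlift_perm_fun.
have : s (lift i k) != s i by rewrite (inj_eq perm_inj) eq_sym neq_lift.
by case: (unliftP (s i) (s (lift i k))) => [k' -> _ | -> ]; rewrite ?eqxx.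
Qed.

Lemma unlift_perm_fun_inj : injective unlift_perm_fun.
Proof.
move=> k1 k2 /(congr1 (lift (s i))); rewrite !lift_unlift_perm_fun.
by move/perm_inj/lift_inj.
Qed.

Definition unlift_perm : {perm 'I_n} := perm unlift_perm_fun_inj.

Lemma lift_perm_unlift : lift_perm i (s i) unlift_perm = s.
Proof.
apply/permP => k; case: (unliftP i k) => [k' ->|->]; last by rewrite lift_perm_id.
by rewrite lift_perm_lift permE lift_unlift_perm_fun.
Qed.

End UnliftPerm.

Lemma unlift_lift_perm n (i : 'I_n.+1) (s : {perm 'I_n}) :
  unlift_perm i (lift_perm i i s) = s.
Proof.
apply/permP => k; apply: (@lift_inj _ i).
by rewrite permE -{1}(lift_perm_id i i s) lift_unlift_perm_fun lift_perm_lift.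
Qed.

Section SignedPermutations.
Variable n : nat.
Implicit Types p q : signed_perm n.

Lemma card_signed_perm : #|signed_perm n| = (2 ^ n * n`!)%N.
Proof. by rewrite card_prod card_ffun card_bool card_ord card_Sn. Qed.

Lemma excB_sum p : excB p = (\sum_(k < n) is_excB p k)%N.
Proof.
rewrite /excB -sum1_card big_mkcond /=; apply: eq_bigr => k _.
by rewrite inE; case: (is_excB p k).
Qed.

Lemma excB_le p : (excB p <= n)%N.
Proof. by rewrite /excB (leq_trans (max_card _)) ?card_ord. Qed.

Definition pos_fixed p k := ~~ p.1 k && (p.2 k == k).

Lemma derangementBE p : derangementB p = [forall k, ~~ pos_fixed p k].
Proof. by []. Qed.

Lemma is_excB_pos_fixed p k : pos_fixed p k -> is_excB p k = false.
Proof. by case/andP => pos /eqP fix_k; rewrite /is_excB fix_k ltxx (negPf pos). Qed.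

Lemma sval_bound (e : {ffun 'I_n -> bool}) (k : 'I_n) :
  (- (n.+1)%:Z < Defs.sval e k < (n.+1)%:Z)%R.
Proof.
have := ltn_ord k; rewrite /Defs.sval.
by case: (e k) => lt_kn; apply/andP; split; lia.
Qed.

End SignedPermutations.

Lemma ltr_sval_lift n (i : 'I_n.+1) (e : {ffun 'I_n -> bool})
    (e' : {ffun 'I_n.+1 -> bool}) : (forall k, e' (lift i k) = e k) -> forall a b,
  (Defs.sval e' (lift i a) < Defs.sval e' (lift i b))%R = (Defs.sval e a < Defs.sval e b)%R.
Proof.
move=> e'E a b; rewrite /Defs.sval !e'E /=.
have lt_ab : (bump i a < bump i b)%N = (a < b)%N by rewrite !ltnNge leq_bump2.
have lt_ba : (bump i b < bump i a)%N = (b < a)%N by rewrite !ltnNge leq_bump2.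
case: (e a); case: (e b); rewrite /= ?ltrN2 ?ltz_nat ?ltnS ?lt_ab ?lt_ba //.
all: by apply/idP; lia.
Qed.

Section InsertMax.
Variable n : nat.
Implicit Types q : signed_perm n.
Local Notation N := (@ord_max n).

Definition sign_ext (e : {ffun 'I_n -> bool}) (b : bool) : {ffun 'I_n.+1 -> bool} :=
  [ffun k => if unlift N k is Some k' then e k' else b].

Lemma sign_ext_lift e b k : sign_ext e b (lift N k) = e k.
Proof. by rewrite ffunE liftK. Qed.

Lemma sign_ext_max e b : sign_ext e b N = b.
Proof. by rewrite ffunE unlift_none. Qed.

Lemma sval_ext_lift e b k : Defs.sval (sign_ext e b) (lift N k) = Defs.sval e k.
Proof. by rewrite /Defs.sval sign_ext_lift lift_max. Qed.

Lemma sval_ext_max e b : Defs.sval (sign_ext e b) N = if b then - (n.+1)%:Z else (n.+1)%:Z.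
Proof. by rewrite /Defs.sval sign_ext_max. Qed.

(* Gives n+1 the sign b and puts it right after c in its cycle:
   w'(c) = n+1 and w'(n+1) = w(c); for c = n+1 it becomes a fixed point. *)
Definition ins_max q (b : bool) (c : 'I_n.+1) : signed_perm n.+1 :=
  (sign_ext q.1 b, (tperm c N * lift_perm N N q.2)%g).

Lemma ins_maxE q b c x : (ins_max q b c).2 x = lift_perm N N q.2 (tperm c N x).
Proof. by rewrite /= permM. Qed.

Lemma ins_max_c q b c : (ins_max q b c).2 c = N.
Proof. by rewrite ins_maxE tpermL lift_perm_id. Qed.

Lemma lift_perm_max_eq (s : {perm 'I_n}) c : (lift_perm N N s c == N) = (c == N).
Proof.
case: (unliftP N c) => [j ->|->]; last by rewrite lift_perm_id !eqxx.
by rewrite lift_perm_lift !(eq_sym _ N) !(negPf (neq_lift _ _)).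
Qed.

Lemma is_excB_ins_max_max q b c : is_excB (ins_max q b c) N = b.
Proof.
rewrite /is_excB ins_maxE tpermR /= sign_ext_max.
case: (unliftP N c) => [j ->|->]; last by rewrite lift_perm_id ltxx eqxx andbT.
rewrite lift_perm_lift sval_ext_lift sval_ext_max (eq_sym _ N) (negPf (neq_lift _ _)).
rewrite andbF orbF; have /andP[lo hi] := sval_bound q.1 (q.2 j).
by case: b => //; apply/negbTE; rewrite -leNgt ltW.
Qed.

Lemma is_excB_ins_max_lift q b c k :
  is_excB (ins_max q b c) (lift N k) = if c == lift N k then ~~ b else is_excB q k.
Proof.
rewrite /is_excB ins_maxE /= sval_ext_lift.
have [->|c_neq] := eqVneq c (lift N k).
  rewrite tpermL lift_perm_id sval_ext_max (negPf (neq_lift _ _)) andbF orbF.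
  have /andP[lo hi] := sval_bound q.1 k.
  by case: b => /=; [apply/negbTE; rewrite -leNgt ltW|].
rewrite tpermD ?neq_lift // lift_perm_lift sval_ext_lift sign_ext_lift.
by rewrite (inj_eq lift_inj).
Qed.

Lemma pos_fixed_ins_max_max q b c : pos_fixed (ins_max q b c) N = ~~ b && (c == N).
Proof. by rewrite /pos_fixed ins_maxE tpermR lift_perm_max_eq /= sign_ext_max. Qed.

Lemma pos_fixed_ins_max_lift q b c k :
  pos_fixed (ins_max q b c) (lift N k) = (c != lift N k) && pos_fixed q k.
Proof.
rewrite /pos_fixed ins_maxE /= sign_ext_lift.
have [->|c_neq] := eqVneq c (lift N k).
  by rewrite tpermL lift_perm_id (negPf (neq_lift _ _)) andbF.
by rewrite tpermD ?neq_lift // lift_perm_lift (inj_eq lift_inj).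
Qed.

Lemma ins_max_inj :
  injective (fun t : signed_perm n * bool * 'I_n.+1 => ins_max t.1.1 t.1.2 t.2).
Proof.
move=> [[[e1 s1] b1] c1] [[[e2 s2] b2] c2] /= E.
have [E1 E2] : sign_ext e1 b1 = sign_ext e2 b2 /\
    (tperm c1 N * lift_perm N N s1 = tperm c2 N * lift_perm N N s2)%g.
  by case: E.
have eq_b : b1 = b2 by rewrite -(sign_ext_max e1 b1) E1 sign_ext_max.
have eq_c : c1 = c2.
  apply: (@perm_inj _ (ins_max (e2, s2) b2 c2).2).
  by rewrite -{1}E !ins_max_c.
have eq_e : e1 = e2.
  by apply/ffunP => k; rewrite -(sign_ext_lift e1 b1) E1 sign_ext_lift.
suff eq_s : s1 = s2 by rewrite eq_b eq_c eq_e eq_s.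
apply/permP => k; apply: (@lift_inj _ N).
move: E2; rewrite eq_c => /mulgI E2.
by rewrite -(lift_perm_lift N N s1) -(lift_perm_lift N N s2) E2.
Qed.

Lemma ins_max_bij :
  bijective (fun t : signed_perm n * bool * 'I_n.+1 => ins_max t.1.1 t.1.2 t.2).
Proof.
apply: inj_card_bij; first exact: ins_max_inj.
by rewrite !card_prod !card_ffun !card_bool !card_ord !card_Sn expnS factS; nia.
Qed.

Lemma excB_ins_max_fix q b : excB (ins_max q b N) = (b + excB q)%N.
Proof.
rewrite !excB_sum (bigD1_ord N) //= is_excB_ins_max_max; congr (_ + _)%N.
by apply: eq_bigr => k _; rewrite is_excB_ins_max_lift (negPf (neq_lift _ _)).
Qed.

Lemma excB_ins_max_cycle q b i :
  (excB (ins_max q b (lift N i)) + is_excB q i = (excB q).+1)%N.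
Proof.
rewrite !excB_sum (bigD1_ord N) //= is_excB_ins_max_max.
under eq_bigr do rewrite is_excB_ins_max_lift (inj_eq lift_inj).
rewrite (bigD1 i) //= eqxx [in RHS](bigD1 i) //=.
rewrite (eq_bigr (fun k => is_excB q k : nat)) => [|k /negPf]; last by rewrite eq_sym => ->.
by case: b; case: (is_excB q i) => /=; lia.
Qed.

Lemma derangementB_ins_max_fix q b : derangementB (ins_max q b N) = b && derangementB q.
Proof.
rewrite !derangementBE (forall_lift N) pos_fixed_ins_max_max eqxx andbT negbK.
by congr (_ && _); apply: eq_forallb => k; rewrite pos_fixed_ins_max_lift neq_lift.
Qed.

Lemma derangementB_ins_max_cycle q b i :
  derangementB (ins_max q b (lift N i)) = [forall k, (k != i) ==> ~~ pos_fixed q k].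
Proof.
rewrite !derangementBE (forall_lift N) pos_fixed_ins_max_max eq_sym.
rewrite (negPf (neq_lift _ _)) andbF /=.
apply: eq_forallb => k; rewrite pos_fixed_ins_max_lift (inj_eq lift_inj) eq_sym.
by case: (k == i).
Qed.

End InsertMax.

Definition only_pos_fixed n (q : signed_perm n) (i : 'I_n) :=
  pos_fixed q i && [forall k, (k != i) ==> ~~ pos_fixed q k].

Section InsertFixed.
Variables (m : nat) (i : 'I_m.+1).
Implicit Types r : signed_perm m.

Definition ins_fixed r : signed_perm m.+1 :=
  ([ffun k => if unlift i k is Some k' then r.1 k' else false], lift_perm i i r.2).

Definition del_fixed (q : signed_perm m.+1) : signed_perm m :=
  ([ffun k => q.1 (lift i k)], unlift_perm i q.2).

Lemma ins_fixed1_lift r k : (ins_fixed r).1 (lift i k) = r.1 k.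
Proof. by rewrite ffunE liftK. Qed.

Lemma ins_fixed1_id r : (ins_fixed r).1 i = false.
Proof. by rewrite ffunE unlift_none. Qed.

Lemma only_pos_fixed_ins_fixed r : only_pos_fixed (ins_fixed r) i = derangementB r.
Proof.
rewrite /only_pos_fixed derangementBE /pos_fixed /= ins_fixed1_id lift_perm_id eqxx /=.
rewrite (forall_lift i) eqxx /=; apply: eq_forallb => k.
by rewrite eq_sym neq_lift ins_fixed1_lift lift_perm_lift (inj_eq lift_inj).
Qed.

Lemma excB_ins_fixed r : excB (ins_fixed r) = excB r.
Proof.
rewrite !excB_sum (bigD1_ord i) //= /is_excB /= ins_fixed1_id lift_perm_id ltxx /= add0n.
apply: eq_bigr => k _; rewrite lift_perm_lift ins_fixed1_lift (inj_eq lift_inj).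
by rewrite (@ltr_sval_lift _ i r.1) // => k'; rewrite ins_fixed1_lift.
Qed.

Lemma ins_fixed_bij : {on [pred q | only_pos_fixed q i], bijective ins_fixed}.
Proof.
exists del_fixed => [[e s] _ | [e s]].
  rewrite /del_fixed /ins_fixed /= unlift_lift_perm; congr (_, _).
  by apply/ffunP => k; rewrite !ffunE liftK.
rewrite inE /only_pos_fixed /pos_fixed /= => /andP[/andP[pos_i /eqP fix_i] _].
rewrite /ins_fixed /del_fixed /=; congr (_, _).
  apply/ffunP => k; rewrite ffunE; case: (unliftP i k) => [k' ->|->].
    by rewrite ffunE.
  by apply/esym/negbTE.
by rewrite -[RHS](lift_perm_unlift i s) fix_i.
Qed.

End InsertFixed.

Section DerangementPolynomial.
Variable R : comNzRingType.

Definition dweight n (p : signed_perm n) : {poly R} :=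
  if derangementB p then 'X^(excB p) else 0.

Lemma dB_sum_dweight n : dB R n = \sum_(p : signed_perm n) dweight p.
Proof. by rewrite /dB big_mkcond. Qed.

Lemma dB0 : dB R 0 = 1.
Proof.
rewrite dB_sum_dweight (eq_bigr (fun _ => 1)) ?sumr_const ?card_signed_perm // => p _.
rewrite /dweight excB_sum big_ord0.
by have -> : derangementB p by apply/forallP => -[].
Qed.

Lemma size_dB n : (size (dB R n) <= n.+1)%N.
Proof.
rewrite /dB; apply: (leq_trans (size_sum _ _ _)); apply/bigmax_leqP => p _.
by rewrite size_polyXn ltnS excB_le.
Qed.

Lemma sum_ins_max n (F : signed_perm n.+1 -> {poly R}) : \sum_p F p =
  \sum_(q : signed_perm n) \sum_(b : bool) \sum_(c < n.+1) F (ins_max q b c).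
Proof.
rewrite (reindex _ (onW_bij _ (@ins_max_bij n))) /=.
rewrite -(pair_big xpredT xpredT (fun qb c => F (ins_max qb.1 qb.2 c))) /=.
by rewrite -(pair_big xpredT xpredT (fun q b => \sum_(c < n.+1) F (ins_max q b c))).
Qed.

Lemma dweight_ins_max_fix n (q : signed_perm n) b :
  dweight (ins_max q b ord_max) = if b then 'X * dweight q else 0.
Proof.
rewrite /dweight derangementB_ins_max_fix excB_ins_max_fix; case: b => //=.
by case: (derangementB q); rewrite ?mulr0 // add1n exprS.
Qed.

(* x^(exc q + 1 - [i is a B-excedance of q]): after n+1 is inserted right
   after i, exactly one of i and n+1 is a B-excedance. *)
Definition cycle_weight n (q : signed_perm n) i : {poly R} :=
  if is_excB q i then 'X^(excB q) else 'X^((excB q).+1).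

Lemma dweight_ins_max_cycle n (q : signed_perm n) b i :
  dweight (ins_max q b (lift ord_max i)) =
    (if derangementB q then cycle_weight q i else 0)
  + (if only_pos_fixed q i then 'X^((excB q).+1) else 0).
Proof.
rewrite /dweight derangementB_ins_max_cycle /cycle_weight /only_pos_fixed.
have excE := excB_ins_max_cycle q b i.
case: (boolP (derangementB q)) => [der | nder].
  move: (der); rewrite derangementBE => /forallP der_k.
  rewrite ifT; last by apply/forallP => k; rewrite der_k implybT.
  rewrite (negPf (der_k i)) /= addr0.
  by case: (is_excB q i) excE => /= excE; congr ('X^_); lia.
case: (boolP [forall k, (k != i) ==> ~~ pos_fixed q k]) => [other | _]; last first.
  by rewrite andbF add0r.
have pos_i : pos_fixed q i.
  apply: contraNT nder => npos_i; rewrite derangementBE; apply/forallP => k.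
  by case: (eqVneq k i) => [-> // | ne]; apply: (implyP (forallP other k)).
rewrite pos_i add0r; rewrite (is_excB_pos_fixed pos_i) in excE.
by congr ('X^_); lia.
Qed.

Lemma sum_cycle_weight n (q : signed_perm n) :
  (\sum_(i < n) cycle_weight q i) *+ 2 =
  ('X *+ 2) * (n%:R * 'X^(excB q)) + ('X *+ 2 * (1 - 'X)) * ('X^(excB q))^`().
Proof.
have exc_split : (excB q + \sum_(i < n) ~~ is_excB q i = n)%N.
  rewrite excB_sum -big_split /= -[RHS]card_ord -sum1_card.
  by apply: eq_bigr => k _; case: (is_excB q k).
have -> : \sum_(i < n) cycle_weight q i =
    'X^(excB q) *+ excB q + 'X^((excB q).+1) *+ (n - excB q).
  transitivity (\sum_(i < n)
      ('X^(excB q) *+ is_excB q i + 'X^((excB q).+1) *+ ~~ is_excB q i) : {poly R}).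
    apply: eq_bigr => i _; rewrite /cycle_weight.
    by case: (is_excB q i); rewrite ?addr0 ?add0r.
  rewrite big_split /= !sumrMnr -excB_sum; congr (_ + _ *+ _); apply/eqP.
  by rewrite -(eqn_add2l (excB q)) subnKC ?excB_le // exc_split.
have le_en := excB_le q; move: (excB q) le_en => e le_en.
rewrite -{2}(subnKC le_en) derivXn; move: (n - e)%N => k {le_en}.
by case: e => [|e]; rewrite ?expr0 ?mulr0n //= ?exprS; ring.
Qed.

Lemma sum_only_pos_fixed m (i : 'I_m.+1) :
  \sum_(q : signed_perm m.+1) (if only_pos_fixed q i then 'X^(excB q) else 0) = dB R m.
Proof.
rewrite -big_mkcond (reindex _ (ins_fixed_bij i)) /=.
by apply: eq_big => [r|r _]; rewrite ?only_pos_fixed_ins_fixed ?excB_ins_fixed.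
Qed.

Lemma dB_rec n : dB R n.+1 = 'X * dB R n + ('X *+ 2) * (n%:R * dB R n)
  + ('X *+ 2 * (1 - 'X)) * (dB R n)^`() + ('X *+ 2) * (n%:R * dB R n.-1).
Proof.
pose A q : {poly R} := if derangementB q then \sum_(i < n) cycle_weight q i else 0.
pose B q : {poly R} := \sum_(i < n) (if only_pos_fixed q i then 'X^(excB q) else 0).
have per_q q : \sum_(b : bool) \sum_(c < n.+1) dweight (ins_max q b c) =
    'X * dweight q + (A q + 'X * B q) *+ 2.
  have cycles b : \sum_(i < n) dweight (ins_max q b (lift ord_max i)) = A q + 'X * B q.
    under eq_bigr do rewrite dweight_ins_max_cycle.
    rewrite big_split /= mulr_sumr; congr (_ + _).
      by rewrite /A; case: (derangementB q) => //; rewrite big1.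
    by apply: eq_bigr => i _; case: (only_pos_fixed q i); rewrite ?mulr0 // exprS.
  rewrite big_bool /= !(bigD1_ord ord_max) //= !dweight_ins_max_fix add0r !cycles.
  by rewrite -addrA.
have sumA : (\sum_q A q) *+ 2 =
    ('X *+ 2) * (n%:R * dB R n) + ('X *+ 2 * (1 - 'X)) * (dB R n)^`().
  rewrite -sumrMnl dB_sum_dweight raddf_sum !mulr_sumr -big_split /=.
  apply: eq_bigr => p _; rewrite /A /dweight; case: (derangementB p).
    exact: sum_cycle_weight.
  by rewrite mul0rn raddf0 !mulr0 addr0.
have sumB : \sum_q B q = n%:R * dB R n.-1.
  rewrite exchange_big /=; case: n {A per_q sumA} B => [|m] _.
    by rewrite big_ord0 mul0r.
  under eq_bigr do rewrite sum_only_pos_fixed.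
  by rewrite sumr_const card_ord mulr_natl.
rewrite dB_sum_dweight sum_ins_max (eq_bigr _ (fun q _ => per_q q)) big_split /=.
rewrite -mulr_sumr -dB_sum_dweight sumrMnl big_split /= -mulr_sumr mulrnDl sumA sumB.
ring.
Qed.

Lemma dB_rec_etmul n : dB R n.+1 =
  ('X *+ 2) * etmul (eshift (dB R)) n + 'X * dB R n
  + ('X *+ 2 * (1 - 'X)) * (dB R n)^`() + ('X *+ 2) * etmul (dB R) n.
Proof. by rewrite dB_rec etmul_eshift /etmul; ring. Qed.

End DerangementPolynomial.

Section Reciprocity.
Variable F : fieldType.
Implicit Types p q : {poly F}.

Definition palindromic d p := forall x : F, x != 0 -> p.[x] = x ^+ d * p.[x^-1].

Definition antipalindromic d p := forall x : F, x != 0 -> x ^+ d * p.[x^-1] = - p.[x].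

Lemma antipalindromicB d p q :
  antipalindromic d p -> antipalindromic d q -> antipalindromic d (p - q).
Proof.
by move=> ap aq x x0; rewrite hornerD hornerN mulrBr ap // aq // hornerD hornerN opprD.
Qed.

Lemma antipalindromic_XnB n : antipalindromic n.+1 ('X^n - 'X).
Proof.
move=> x x0; rewrite !hornerE exprVn exprS.
have u0 : x ^+ n != 0 by rewrite expf_neq0.
by move: (x ^+ n) u0 => u u0; field; rewrite ?x0 ?u0.
Qed.

Lemma antipalindromic_XBXSn n : antipalindromic n.+2 ('X - 'X^(n.+1)).
Proof.
move=> x x0; rewrite !hornerE exprVn !exprS.
have u0 : x ^+ n != 0 by rewrite expf_neq0.
by move: (x ^+ n) u0 => u u0; field; rewrite ?x0 ?u0.
Qed.

Lemma egf_prod_den_antipalindromic (a : nat -> {poly F}) s n :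
  (forall k, palindromic (k + s) (a k)) ->
  antipalindromic (n.+1 + s) (egf_prod_den a n).
Proof.
move=> pal_a x x0; rewrite /egf_prod_den !horner_sum mulr_sumr -sumrN.
apply: eq_bigr => k _; have le_kn : (k <= n)%N by rewrite -ltnS.
have xV0 : x^-1 != 0 by rewrite invr_eq0.
rewrite !hornerZ !hornerM [(a k).[x]]pal_a // /egf_den.
rewrite !hornerZ !hornerD !hornerN !hornerXn !hornerX.
have -> : (n.+1 + s = (k + s) + (n - k) + 1)%N by lia.
move: (n - k)%N (k + s)%N => m j; rewrite !exprD expr1 !exprVn.
have u0 : x ^+ j != 0 by rewrite expf_neq0.
have v0 : x ^+ m != 0 by rewrite expf_neq0.
move: (x ^+ j) (x ^+ m) u0 v0 => u v u0 v0.
by field; rewrite x0 v0.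
Qed.

Definition reciprocal n p : {poly F} := \poly_(i < n.+2) p`_(n.+1 - i).

Lemma horner_reciprocal n p (x : F) : (size p <= n.+2)%N -> x != 0 ->
  (reciprocal n p).[x] = x ^+ n.+1 * p.[x^-1].
Proof.
move=> sz_p x0; rewrite horner_poly (horner_coef_wide _ sz_p) mulr_sumr.
rewrite (reindex_inj rev_ord_inj) /=; apply: eq_bigr => i _.
have le_i : (i <= n.+1)%N by rewrite -ltnS.
rewrite subSS subKn // exprVn.
have -> : x ^+ n.+1 = x ^+ (n.+1 - i) * x ^+ i by rewrite -exprD subnK.
have u0 : x ^+ i != 0 by rewrite expf_neq0.
by move: (x ^+ i) u0 => u u0; field.
Qed.

(* For p of degree at most n+1, (x^(n+1) p(1/x) - p(x)) / (x - 1) is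
   palindromic of degree n, and what remains of p is palindromic of degree n+1. *)
Definition pal_part n p : {poly F} := (reciprocal n p - p) %/ ('X - 1).

Lemma pal_partE n p (x : F) : (size p <= n.+2)%N -> x != 0 ->
  (pal_part n p).[x] * (x - 1) = x ^+ n.+1 * p.[x^-1] - p.[x].
Proof.
move=> sz_p x0; have dvd : ('X - 1) %| (reciprocal n p - p).
  rewrite -polyC1 dvdp_XsubCl /root !hornerE horner_reciprocal ?oner_neq0 //.
  by rewrite expr1n mul1r invr1 subrr.
by rewrite -horner_reciprocal // -hornerN -hornerD -(divpK dvd) hornerM !hornerE.
Qed.

Lemma pal_part_palindromic n p : (size p <= n.+2)%N -> palindromic n (pal_part n p).
Proof.
move=> sz_p x x0; have [->|x1] := eqVneq x 1; first by rewrite expr1n mul1r invr1.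
have xV0 : x^-1 != 0 by rewrite invr_eq0.
have x1' : x - 1 != 0 by rewrite subr_eq0.
have xV1 : x^-1 - 1 != 0 by rewrite subr_eq0 invr_eq1.
have Ex := pal_partE sz_p x0; have ExV := pal_partE sz_p xV0; rewrite invrK in ExV.
apply: (mulIf x1'); rewrite Ex -[(pal_part n p).[x^-1]](mulfK xV1) ExV exprVn !exprS.
have u0 : x ^+ n != 0 by rewrite expf_neq0.
move: (x ^+ n) u0 (p.[x]) (p.[x^-1]) => u u0 a b.
have x2 : 1 + -1 * x != 0 by rewrite mulN1r subr_eq0 eq_sym.
by field; rewrite x0 u0 x2.
Qed.

Lemma sub_pal_part_palindromic n p :
  (size p <= n.+2)%N -> palindromic n.+1 (p - pal_part n p).
Proof.
move=> sz_p x x0; have xV0 : x^-1 != 0 by rewrite invr_eq0.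
have Ex := pal_partE sz_p x0.
rewrite !hornerE mulrBr (pal_part_palindromic sz_p xV0) invrK.
have -> : x ^+ n.+1 * p.[x^-1] = (pal_part n p).[x] * (x - 1) + p.[x] by rewrite Ex subrK.
rewrite exprVn exprS.
have u0 : x ^+ n != 0 by rewrite expf_neq0.
move: (x ^+ n) u0 ((pal_part n p).[x]) (p.[x]) => u u0 a b.
by field; rewrite ?x0 ?u0.
Qed.

End Reciprocity.

Lemma poly_eq0_of_roots_nat (F : numFieldType) (p : {poly F}) :
  (forall k : nat, p.[k.+2%:R] = 0) -> p = 0.
Proof.
move=> root_p; apply/eqP/negPn/negP => p_neq0.
suff : (size p < size p)%N by rewrite ltnn.
have := @max_poly_roots _ p [seq k.+2%:R | k <- iota 0 (size p)] p_neq0.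
rewrite size_map size_iota; apply.
  by apply/allP => _ /mapP [k _ ->]; apply/rootP.
by rewrite map_inj_uniq ?iota_uniq // => i j /eqP; rewrite eqr_nat => /eqP [].
Qed.

Lemma antipalindromic_eq0 (F : numFieldType) n (p q : {poly F}) : p + q = 0 ->
  antipalindromic n.+1 p -> antipalindromic n.+2 q -> p = 0.
Proof.
move=> pq0 ap aq; apply: poly_eq0_of_roots_nat => k.
have qE : q = - p by apply/eqP; rewrite -addr_eq0 addrC pq0.
set z : F := k.+2%:R; have z0 : z^-1 != 0 by rewrite invr_eq0 pnatr_eq0.
have z1 : z^-1 != 1 by rewrite invr_eq1 pnatr_eq1.
have := ap _ z0; have := aq _ z0; rewrite qE !hornerN invrK.
move: (z^-1) z0 z1 => x x0 x1; rewrite exprS => Eq Ep.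
have : x ^+ n.+1 * p.[z] * (x - 1) = 0.
  rewrite -mulrA mulrN Ep !opprK in Eq.
  by rewrite Ep mulNr mulrBr mulr1 mulrC Eq subrr oppr0.
by move/eqP; rewrite !mulf_eq0 subr_eq0 expf_eq0 (negPf x0) (negPf x1) andbF orbF => /eqP.
Qed.

Lemma egf_prod_den_dB (R : comNzRingType) n : egf_prod_den (dB R) n = egf_num R n.
Proof.
have rec_prod := econv_rec_step (@dB_rec_etmul R) (@egf_den_rec R).
apply: (rec_step_uniq _ rec_prod (@egf_num_rec R)).
by rewrite /econv big_ord1 dB0 /egf_den /egf_num /= scale1r mul1r scale1r expr1.
Qed.

Lemma fpm_spec_pal_part (R : realFieldType) n :
  fpm_spec n (pal_part n (dB R n)) (dB R n - pal_part n (dB R n)).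
Proof.
have sz : (size (dB R n) <= n.+2)%N by apply: leq_trans (size_dB R n) _.
split; first by rewrite addrC subrK.
  exact: pal_part_palindromic.
exact: sub_pal_part_palindromic.
Qed.

Theorem proposition3p2 (R : realFieldType) :
  (exists fp fm : nat -> {poly R}, forall n, fpm_spec n (fp n) (fm n)) /\
  (forall fp fm : nat -> {poly R}, (forall n, fpm_spec n (fp n) (fm n)) ->
     forall n : nat,
       egf_prod_den fp n = ('X^n - 'X)%R /\
       egf_prod_den fm n = ('X - 'X^(n.+1))%R).
Proof.
split; first by do 2 eexists; apply: fpm_spec_pal_part.
move=> fp fm spec n.
have pal_fp k : palindromic (k + 0) (fp k) by rewrite addn0; case: (spec k).
have pal_fm k : palindromic (k + 1) (fm k) by rewrite addn1; case: (spec k).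
have anti_fp := egf_prod_den_antipalindromic n pal_fp.
have anti_fm := egf_prod_den_antipalindromic n pal_fm.
rewrite addn0 in anti_fp; rewrite addn1 in anti_fm.
have anti_p := antipalindromicB anti_fp (antipalindromic_XnB n).
have anti_m := antipalindromicB anti_fm (antipalindromic_XBXSn n).
have sum_fpm : egf_prod_den fp n + egf_prod_den fm n = 'X^n - 'X^(n.+1).
  rewrite -econvDl -[RHS](egf_prod_den_dB R n); apply: eq_econv => k.
  by case: (spec k).
have err0 := antipalindromic_eq0 _ anti_p anti_m.
have p_eq : egf_prod_den fp n - ('X^n - 'X) = 0.
  by apply: err0; rewrite addrACA sum_fpm; ring.
split; apply/eqP; rewrite -subr_eq0; first by rewrite p_eq.
by rewrite -[_ - _]add0r -{1}p_eq addrACA sum_fpm; apply/eqP; ring.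
Qed.
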